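(* For each $t$, the iterate $(x_t,y_t)$ satisfies \[ \sum_{n<t}\bar L_n(x_t,y_t)\ge\min_{x\in\mathcal{X}}\max_{y\in\mathcal{Y}}\sum_{n<t}\bar L_n(x,y), \] and \[ \min_{x\in\mathcal{X}}\max_{y\in\mathcal{Y}}\sum_{n<t}\bar L_n(x,y)-\theta_t^\top x_t^{**}\ge\sum_{n<t}\bar L_n(x_t,y_t)-\theta_t^\top x_t, \] where $x_t^{**}\in\arg\min_{x\in\mathcal{X}}\max_{y\in\mathcal{Y}}\sum_{n<t}\bar L_n(x,y)$.
   Context: Let $\mathcal{X}\subseteq\mathbb{R}^d$ be compact. For $t=1,\dots,T$, $f_t,c_{it}:\mathcal{X}\to\mathbb{R}$ ($i=1,\dots,I$) are $G_0$-Lipschitz w.r.t. $\ell_1$, $b_i\ge0$, and for $y=(\gamma_1,\dots,\gamma_I)$, $L_t(x,y)=f_t(x)+\sum_i\gamma_i[c_{it}(x)-b_i]$. Fix $\lambda>0$, $y_{\max}>0$, $\mathcal{Y}=[0,y_{\max}]^I$, and $\bar L_n(x,y)=L_n(x,y)+\frac{\lambda}{n^{1/9}}\sum_i\log(\gamma_i+1)$. A global minimax point of $h$ on $\mathcal{X}\times\mathcal{Y}$ is $(x^*,y^* )$ with $h(x^*,y)\le h(x^*,y^* )\le\max_{y'\in\mathcal{Y}}h(x,y')$ for all $x,y$. Algorithm (FTDPL with $M=1$): $\eta=T^{-2/3}$; at each period $t$, draw $\theta_t\in\mathbb{R}^d$ with i.i.d. coordinates exponentially distributed with parameter $\eta$,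 and let $(x_t,y_t)$ be a global minimax point of $(x,y)\mapsto\sum_{n<t}\bar L_n(x,y)-\theta_t^\top x$ on $\mathcal{X}\times\mathcal{Y}$. *)

From HB Require Import structures.
From mathcomp Require Import all_boot all_order all_algebra.
From mathcomp Require Import all_classical all_reals all_analysis.
Set Implicit Arguments. Unset Strict Implicit. Unset Printing Implicit Defensive.
Import Order.TTheory GRing.Theory Num.Theory.
Import numFieldNormedType.Exports.
Local Open Scope classical_set_scope.
Local Open Scope ring_scope.

Definition l1dist (R : realType) (d : nat) (x x' : 'rV[R]_d) : R :=
  \sum_(i < d) `|x ord0 i - x' ord0 i|.

Definition lipschitz_l1 (R : realType) (d : nat) (X : set 'rV[R]_d)
  (G : R) (g : 'rV[R]_d -> R) : Prop :=
  forall x x', X x -> X x' -> `|g x - g x'| <= G * l1dist x x'.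

Definition dotp (R : realType) (d : nat) (u x : 'rV[R]_d) : R :=
  \sum_(i < d) u ord0 i * x ord0 i.

Definition Ybox (R : realType) (I : nat) (ymax : R) : set 'rV[R]_I :=
  [set y | forall i : 'I_I, 0 <= y ord0 i <= ymax].

Definition maxY (R : realType) (d I : nat) (Y : set 'rV[R]_I)
  (h : 'rV[R]_d -> 'rV[R]_I -> R) (x : 'rV[R]_d) : R :=
  sup [set h x y | y in Y].

Definition global_minimax (R : realType) (d I : nat) (X : set 'rV[R]_d)
  (Y : set 'rV[R]_I) (h : 'rV[R]_d -> 'rV[R]_I -> R) xs ys : Prop :=
  X xs /\ Y ys /\
  forall x y, X x -> Y y -> h xs y <= h xs ys /\ h xs ys <= maxY Y h x.

Definition argmin_maxY (R : realType) (d I : nat) (X : set 'rV[R]_d)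
  (Y : set 'rV[R]_I) (h : 'rV[R]_d -> 'rV[R]_I -> R) xs : Prop :=
  X xs /\ forall x, X x -> maxY Y h xs <= maxY Y h x.

Definition Lag (R : realType) (d I : nat) (f : nat -> 'rV[R]_d -> R)
  (c : 'I_I -> nat -> 'rV[R]_d -> R) (b : 'I_I -> R) (n : nat)
  (x : 'rV[R]_d) (y : 'rV[R]_I) : R :=
  f n x + \sum_(i < I) y ord0 i * (c i n x - b i).

Definition Lbar (R : realType) (d I : nat) (f : nat -> 'rV[R]_d -> R)
  (c : 'I_I -> nat -> 'rV[R]_d -> R) (b : 'I_I -> R) (lam : R) (n : nat)
  (x : 'rV[R]_d) (y : 'rV[R]_I) : R :=
  Lag f c b n x y +
  lam / powR (n%:R) (9%:R)^-1 * \sum_(i < I) ln (y ord0 i + 1).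

(* cumulative objective sum_{n < t} Lbar_n, periods indexed from 1 *)
Definition cumLbar (R : realType) (d I : nat) (f : nat -> 'rV[R]_d -> R)
  (c : 'I_I -> nat -> 'rV[R]_d -> R) (b : 'I_I -> R) (lam : R) (t : nat)
  (x : 'rV[R]_d) (y : 'rV[R]_I) : R :=
  \sum_(1 <= n < t) Lbar f c b lam n x y.

From HB Require Import structures.
From mathcomp Require Import all_boot all_order all_algebra.
From mathcomp Require Import all_classical all_reals all_analysis.
Set Implicit Arguments. Unset Strict Implicit. Unset Printing Implicit Defensive.
Import Order.TTheory GRing.Theory Num.Theory.
Import numFieldNormedType.Exports.
Local Open Scope classical_set_scope.
Local Open Scope ring_scope.

(* The linear term [g x = theta^T x] does not depend on [y], so at a global minimax
   point [(xs, ys)] of [h x y - g x] the point [ys] also maximises [h xs]; hence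
   [h xs ys = max_y h xs y >= min_x max_y h x y], and minimality of [xs] for the perturbed
   problem gives [h xs ys - g xs <= max_y h x y - g x] for every [x], in particular for
   [x**].  Since [maxY] is a supremum, these steps need [y |-> h x y] to be bounded above
   on the box; for [cumLbar] this is clear because [Y] is bounded and [ln] is monotone. *)

Section MaxY.
Variables (R : realType) (d I : nat) (X : set 'rV[R]_d) (Y : set 'rV[R]_I).
Implicit Types (h : 'rV[R]_d -> 'rV[R]_I -> R) (g : 'rV[R]_d -> R).

Lemma maxY_le h x a :
  Y !=set0 -> (forall y, Y y -> h x y <= a) -> maxY Y h x <= a.
Proof.
move=> [y0 Yy0] hle; apply: ge_sup; first by exists (h x y0), y0.
by move=> _ [y Yy <-]; exact: hle.
Qed.

Lemma le_maxY h x y :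
  has_ubound [set h x y | y in Y] -> Y y -> h x y <= maxY Y h x.
Proof. by move=> hub Yy; apply: (ub_le_sup hub); exists y. Qed.

Lemma maxY_subr_le h g x :
  Y !=set0 -> has_ubound [set h x y | y in Y] ->
  maxY Y (fun x y => h x y - g x) x <= maxY Y h x - g x.
Proof. by move=> Yne hub; apply: maxY_le => // y Yy; rewrite lerD2r le_maxY. Qed.

Section ShiftedSaddle.
Variables (h : 'rV[R]_d -> 'rV[R]_I -> R) (g : 'rV[R]_d -> R) (xs : 'rV[R]_d)
  (ys : 'rV[R]_I).
Hypothesis (Yne : Y !=set0)
  (hsaddle : global_minimax X Y (fun x y => h x y - g x) xs ys).

Lemma global_minimax_subr_maxY_le : maxY Y h xs <= h xs ys.
Proof.
have [Xxs [Yys hxy]] := hsaddle.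
apply: maxY_le => // y Yy.
by have [+ _] := hxy xs y Xxs Yy; rewrite lerD2r.
Qed.

Lemma global_minimax_subr_le_maxY x :
  has_ubound [set h x y | y in Y] -> X x ->
  h xs ys - g xs <= maxY Y h x - g x.
Proof.
move=> hub Xx; have [Xxs [Yys hxy]] := hsaddle.
have [_ +] := hxy x ys Xx Yys; move/le_trans; apply.
exact: maxY_subr_le.
Qed.

End ShiftedSaddle.
End MaxY.

Lemma Ybox_neq0 (R : realType) (I : nat) (ymax : R) : 0 <= ymax -> @Ybox R I ymax !=set0.
Proof. by move=> h; exists 0 => i; rewrite mxE lexx. Qed.

Section CumLbarBounded.
Variables (R : realType) (d I : nat) (f : nat -> 'rV[R]_d -> R)
  (c : 'I_I -> nat -> 'rV[R]_d -> R) (b : 'I_I -> R) (lam ymax : R).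

Lemma Lbar_le_Ybox n x y : Ybox ymax y ->
  Lbar f c b lam n x y <=
  f n x + \sum_(i < I) ymax * `|c i n x - b i|
  + `|lam / powR (n%:R) (9%:R)^-1| * \sum_(i < I) ln (ymax + 1).
Proof.
move=> Yy; rewrite /Lbar /Lag -!addrA lerD2l.
have mult_le : \sum_(i < I) y ord0 i * (c i n x - b i)
    <= \sum_(i < I) ymax * `|c i n x - b i|.
  apply: ler_sum => i _; have /andP[y0 yle] := Yy i.
  apply: le_trans (ler_norm _) _; rewrite normrM (ger0_norm y0).
  exact: ler_wpM2r.
have log_le : \sum_(i < I) `|ln (y ord0 i + 1)| <= \sum_(i < I) ln (ymax + 1).
  apply: ler_sum => i _; have /andP[y0 yle] := Yy i.
  have y1_ge1 : 1 <= y ord0 i + 1 by rewrite lerDr.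
  have y1_gt0 : 0 < y ord0 i + 1 by apply: lt_le_trans y1_ge1.
  rewrite ger0_norm ?ln_ge0 // ler_ln ?posrE ?lerD2r //.
  by apply: lt_le_trans y1_gt0 _; rewrite lerD2r.
apply: lerD mult_le _; apply: le_trans (ler_norm _) _.
by rewrite normrM ler_wpM2l // (le_trans (ler_norm_sum _ _ _)).
Qed.

Lemma cumLbar_ubound_Ybox t x :
  has_ubound [set cumLbar f c b lam t x y | y in Ybox ymax].
Proof.
eexists => _ [y Yy <-]; apply: ler_sum => n _.
exact: Lbar_le_Ybox.
Qed.

End CumLbarBounded.

Theorem lemma5 (R : realType) (d I T : nat) (X : set 'rV[R]_d)
  (f : nat -> 'rV[R]_d -> R) (c : 'I_I -> nat -> 'rV[R]_d -> R)
  (b : 'I_I -> R) (G0 lam ymax : R)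
  (hX : compact X)
  (hf : forall t, (1 <= t <= T)%N -> lipschitz_l1 X G0 (f t))
  (hc : forall i t, (1 <= t <= T)%N -> lipschitz_l1 X G0 (c i t))
  (hb : forall i, 0 <= b i)
  (hlam : 0 < lam) (hymax : 0 < ymax)
  (t : nat) (ht : (1 <= t <= T)%N)
  (theta : 'rV[R]_d) (htheta : forall k, 0 <= theta ord0 k)
  (xt : 'rV[R]_d) (yt : 'rV[R]_I)
  (hxy : global_minimax X (@Ybox R I ymax)
           (fun x y => cumLbar f c b lam t x y - dotp theta x) xt yt)
  (xss : 'rV[R]_d)
  (hxss : argmin_maxY X (@Ybox R I ymax) (cumLbar f c b lam t) xss) :
  maxY (@Ybox R I ymax) (cumLbar f c b lam t) xss <= cumLbar f c b lam t xt yt /\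
  cumLbar f c b lam t xt yt - dotp theta xt
    <= maxY (@Ybox R I ymax) (cumLbar f c b lam t) xss - dotp theta xss.
Proof.
set C := cumLbar f c b lam t.
have Yne := @Ybox_neq0 R I ymax (ltW hymax).
have [Xxss xss_min] := hxss.
have [Xxt _] := hxy.
split.
  apply: le_trans (xss_min _ Xxt) _.
  exact: (global_minimax_subr_maxY_le (h := C) (g := dotp theta) Yne hxy).
apply: (global_minimax_subr_le_maxY (h := C) (g := dotp theta) Yne hxy _ Xxss).
exact: cumLbar_ubound_Ybox.
Qed.
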